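(* Let $m \ge 1$ and $n \ge 2m+1$ be integers. Then for every real $r$ with $|r|<1$, $$\int_{-1}^1 \frac{T_n(s)(1-s^2)^{m-\frac{1}{2}}}{(s-r)^2}\,ds = \pi(-1)^{m+1}\left(\frac{1}{2}\right)^{2m-1}\sum_{j=0}^{2m-1}(-1)^j\binom{2m-1}{j}(n+1-2m+2j)\,U_{n-2m+2j}(r),$$ where the integral is a Hadamard finite-part integral.
   Context: $T_k(s)=\cos(k\cos^{-1}s)$ and $U_k(s)=\frac{\sin((k+1)\cos^{-1}s)}{\sin(\cos^{-1}s)}$ are the Tchebyshev polynomials of the first and second kinds. For a positive integer $\alpha\ge 2$ and $|r|<1$, the integral $\int_{-1}^1 \frac{D(s)}{(s-r)^\alpha}ds$ is understood in the Hadamard finite-part sense; in particular it satisfies $\int_{-1}^1 \frac{D(s)}{(s-r)^{\alpha}}ds=\frac{1}{\alpha-1}\frac{d}{dr}\int_{-1}^1\frac{D(s)}{(s-r)^{\alpha-1}}ds$, where for $\alpha-1=1$ the right-hand integral is a Cauchy principal value. $\binom{a}{j}=\frac{a!}{j!(a-j)!}$. *)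

From Stdlib Require Import Reals.
From Coquelicot Require Import Coquelicot.
Open Scope R_scope.

Definition chebT (k : nat) (s : R) : R := cos (INR k * acos s).
Definition chebU (k : nat) (s : R) : R := sin ((INR k + 1) * acos s) / sin (acos s).

Definition pv_trunc (D : R -> R) (r eps : R) : R :=
  RInt (fun s => D s / (s - r)) (-1) (r - eps) + RInt (fun s => D s / (s - r)) (r + eps) 1.

Definition is_CPV (D : R -> R) (r l : R) : Prop :=
  filterlim (fun eps => pv_trunc D r eps) (at_right 0) (locally l).

Definition CPV (D : R -> R) (r : R) : R := iota (is_CPV D r).

(* l is the Hadamard finite-part integral int_{-1}^1 D(s)/(s-r)^2 ds, i.e.
   the principal value exists for all points of (-1,1) and
   l = d/dr of the principal value int_{-1}^1 D(s)/(s-r) ds (alpha = 2). *)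
Definition is_hadamard2 (D : R -> R) (r l : R) : Prop :=
  (forall x, -1 < x < 1 -> exists v, is_CPV D x v) /\
  is_derive (fun x => CPV D x) r l.

From Stdlib Require Import Reals Lra Lia.
From Coquelicot Require Import Coquelicot.
Open Scope R_scope.

(* With s = cos t the integrand's numerator is cos (n t) sin^(2m-1) t, and
   expanding the odd power of sin t writes it as a finite combination of the
   functions sin ((k+1) t) = sqrt (1 - s^2) U_k(s).  The principal value of
   sin ((k+1) t) / (s - x) is -pi T_(k+1)(x): for k = 0 by an explicit
   primitive with a logarithmic singularity at x, and in general by the
   recurrence U_(k+2) = 2 s U_(k+1) - U_k, because s g(s) / (s - x) =
   g(s) + x g(s) / (s - x) and sin ((k+1) t) integrates to 0 for k >= 1.
   The finite-part integral is the derivative in x of the principal value,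
   and T_(k+1)' = (k+1) U_k. *)

(* Binomial coefficients as reals.  Unlike [Binomial.C n k], which is junk for
   [k > n], they vanish above the diagonal, so Pascal's rule needs no side
   condition. *)
Fixpoint binR (n k : nat) : R :=
  match n, k with
  | O, O => 1
  | O, S _ => 0
  | S _, O => 1
  | S n', S k' => binR n' k' + binR n' (S k')
  end.

Lemma binR_gt n k : (n < k)%nat -> binR n k = 0.
Proof.
  revert k; induction n as [|n IH]; intros [|k] Hk; simpl; try lia; auto.
  rewrite !IH by lia; ring.
Qed.

Lemma binR_C n k : (k <= n)%nat -> binR n k = Binomial.C n k.
Proof.
  revert k; induction n as [|n IH]; intros [|k] Hk.
  - simpl; symmetry; apply C_n_0.
  - lia.
  - simpl; symmetry; apply C_n_0.
  - simpl. destruct (Nat.eq_dec k n) as [->|Hkn].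
    + rewrite (binR_gt n (S n)), IH, !C_n_n by lia. ring.
    + rewrite !IH by lia. apply Binomial.pascal. lia.
Qed.

Lemma sum_binR_S p (g : nat -> R) :
  sum_f_R0 (fun j => binR (S p) j * g j) (S p) =
  sum_f_R0 (fun j => binR p j * g j) p + sum_f_R0 (fun j => binR p j * g (S j)) p.
Proof.
  rewrite decomp_sum by lia; simpl pred.
  rewrite (sum_eq _ (fun j => binR p j * g (S j) + binR p (S j) * g (S j)))
    by (intros; simpl; ring).
  rewrite plus_sum.
  assert (Hshift : sum_f_R0 (fun j => binR p j * g j) p =
                   g 0%nat + sum_f_R0 (fun j => binR p (S j) * g (S j)) p).
  { destruct p as [|q]; [simpl; ring|].
    rewrite decomp_sum, tech5, (binR_gt (S q) (S (S q))) by lia.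
    simpl; ring. }
  simpl binR at 1; rewrite Hshift; ring.
Qed.

(* The binomial expansion of [(e^{-it} - e^{it})^p e^{iat}], imaginary part. *)
Lemma sum_binR_sin p (a t : R) :
  sum_f_R0 (fun j => (-1) ^ j * binR p j * sin ((a - INR p + 2 * INR j) * t)) p =
  2 ^ p * sin t ^ p * sin (a * t - INR p * (PI / 2)).
Proof.
  revert a; induction p as [|p IH]; intros a.
  - simpl. replace ((a - 0 + 2 * 0) * t) with (a * t - 0 * (PI / 2)) by ring. ring.
  - rewrite (sum_eq _ (fun j => binR (S p) j
                                 * ((-1) ^ j * sin ((a - INR (S p) + 2 * INR j) * t))))
      by (intros; ring).
    rewrite sum_binR_S.
    rewrite (sum_eq _ (fun j => (-1) ^ j * binR p j * sin (((a - 1) - INR p + 2 * INR j) * t)))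
      by (intros; rewrite S_INR; replace (a - (INR p + 1)) with (a - 1 - INR p) by ring; ring).
    rewrite (sum_eq (fun j => binR p j * ((-1) ^ S j * sin ((a - INR (S p) + 2 * INR (S j)) * t)))
                    (fun j => (-1) ^ j * binR p j * sin (((a + 1) - INR p + 2 * INR j) * t) * (-1)))
      by (intros; rewrite !S_INR; simpl pow;
          replace (a - (INR p + 1) + 2 * (INR i + 1)) with (a + 1 - INR p + 2 * INR i) by ring;
          ring).
    rewrite <- scal_sum, !IH, S_INR.
    set (u := a * t - INR p * (PI / 2)).
    replace ((a - 1) * t - INR p * (PI / 2)) with (u - t) by (unfold u; ring).
    replace ((a + 1) * t - INR p * (PI / 2)) with (u + t) by (unfold u; ring).
    replace (a * t - (INR p + 1) * (PI / 2)) with (u - PI / 2) by (unfold u; ring).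
    rewrite !sin_minus, sin_plus, sin_PI2, cos_PI2; simpl pow; ring.
Qed.

Lemma acos_m1 : acos (-1) = PI.
Proof. unfold acos. destruct (Rle_dec (-1) (-1)); [reflexivity | lra]. Qed.

Lemma sin_acos_pos x : -1 < x < 1 -> 0 < sin (acos x).
Proof. intros Hx. rewrite sin_acos by lra. apply sqrt_lt_R0. unfold Rsqr. nra. Qed.

Lemma is_derive_acos x : -1 < x < 1 -> is_derive acos x (-1 / sin (acos x)).
Proof.
  intros Hx. apply is_derive_Reals.
  rewrite sin_acos by lra.
  rewrite <- (derive_pt_acos x Hx). apply (derive_pt_eq_1 _ _ _ (derivable_pt_acos x Hx)).
  reflexivity.
Qed.

Lemma continuous_acos x : continuous acos x.
Proof.
  assert (Hpos : forall y, 0 < y -> continuous acos y).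
  { intros y Hy.
    apply continuous_ext_loc with (fun z => atan (sqrt (1 - z²) / z)).
    - apply (locally_interval _ _ 0 p_infty); [exact Hy | exact I|].
      intros z Hz _. symmetry. now apply acos_atan.
    - apply continuous_comp.
      + apply (continuous_mult (fun z => sqrt (1 - z²)) (fun z => / z)).
        * apply continuous_sqrt_comp, continuity_pt_filterlim. reg.
        * apply continuous_Rinv_comp; [apply continuous_id | lra].
      + apply (ex_derive_continuous (V := R_NormedModule)). eexists. apply is_derive_atan. }
  destruct (Rtotal_order x 0) as [Hx|[->|Hx]]; [| |now apply Hpos].
  - apply (continuous_ext (fun y => PI - acos (- y))).
    { intros y. rewrite acos_opp. lra. }
    apply (continuous_minus (fun _ => PI)); [apply continuous_const|].
    apply continuous_comp; [apply continuity_pt_filterlim; reg | apply Hpos; lra].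
  - apply (ex_derive_continuous (V := R_NormedModule)). eexists. apply is_derive_acos. lra.
Qed.

Lemma is_RInt_derive_interior (F f : R -> R) a b : a < b ->
  (forall t, a <= t <= b -> continuous F t) ->
  (forall t, a < t < b -> is_derive F t (f t)) ->
  (forall t, a <= t <= b -> continuous f t) ->
  is_RInt f a b (F b - F a).
Proof.
  intros Hab HF Hd Hf.
  (* Clamping onto [a, b] makes the integrand continuous on all of R, so its
     primitive is differentiable everywhere and MVT_gen compares it with F. *)
  set (clamp := fun t => (a + b + Rabs (t - a) - Rabs (t - b)) / 2).
  assert (Hclamp : forall t, a <= clamp t <= b).
  { intros t; unfold clamp, Rabs; repeat destruct Rcase_abs; lra. }
  assert (Hclamp_id : forall t, a <= t <= b -> clamp t = t).
  { intros t Ht; unfold clamp, Rabs; repeat destruct Rcase_abs; lra. }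
  set (g := fun t => f (clamp t)).
  assert (Hg : forall t, continuous g t).
  { intros t. apply (continuous_comp clamp f); [|apply Hf, Hclamp].
    apply continuity_pt_filterlim. unfold clamp. reg. }
  set (G := fun t => RInt g a t).
  assert (HG : forall t, is_RInt g a t (G t)).
  { intros t. apply (RInt_correct (V := R_CompleteNormedModule)).
    apply (ex_RInt_continuous (V := R_CompleteNormedModule)). intros; apply Hg. }
  assert (HdG : forall t, is_derive G t (g t)).
  { intros t. apply is_derive_RInt with a; [apply filter_forall, HG | apply Hg]. }
  destruct (MVT_gen (fun t => G t - F t) a b (fun _ => 0)) as [c [_ Hc]].
  - rewrite Rmin_left, Rmax_right by lra. intros t Ht.
    replace 0 with (minus (g t) (f t))
      by (unfold g; rewrite Hclamp_id by lra; unfold minus, plus, opp; simpl; ring).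
    apply (is_derive_minus G F); [apply HdG | apply Hd; lra].
  - rewrite Rmin_left, Rmax_right by lra. intros t Ht.
    apply continuity_pt_minus; apply continuity_pt_filterlim.
    + apply (ex_derive_continuous (V := R_NormedModule)). eexists; apply HdG.
    + apply HF; lra.
  - assert (HGa : G a = 0) by (unfold G; rewrite RInt_point; reflexivity).
    apply is_RInt_ext with g.
    + rewrite Rmin_left, Rmax_right by lra. intros t Ht. unfold g; rewrite Hclamp_id; lra.
    + replace (F b - F a) with (G b) by lra. apply HG.
Qed.

Lemma filterlim_at_right_continuous (phi : R -> R) :
  continuous phi 0 -> filterlim phi (at_right 0) (locally (phi 0)).
Proof.
  intros H. apply (filterlim_filter_le_1 (F := locally 0)); [|exact H].
  intros P [d Hd]. exists d. intros y Hy _. apply Hd, Hy.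
Qed.

Lemma at_right_0_lt d : 0 < d -> at_right 0 (fun e => 0 < e < d).
Proof.
  intros Hd. exists (mkposreal d Hd). intros y Hy Hy0. split; [exact Hy0|].
  apply Rabs_lt_between in Hy. unfold minus, plus, opp in Hy; simpl in Hy. lra.
Qed.

Lemma continuous_sum_f_R0 (F : nat -> R -> R) N s : (forall j, continuous (F j) s) ->
  continuous (fun s => sum_f_R0 (fun j => F j s) N) s.
Proof.
  intros HF. induction N as [|N IH]; [apply HF|].
  apply (continuous_plus (fun s => sum_f_R0 (fun j => F j s) N)); [exact IH | apply HF].
Qed.

Section PrincipalValue.

Variable x : R.
Hypothesis Hx : -1 < x < 1.

Lemma ex_RInt_div_sub (f : R -> R) a b : (forall s, continuous f s) ->
  (forall s, Rmin a b <= s <= Rmax a b -> s <> x) ->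
  ex_RInt (fun s => f s / (s - x)) a b.
Proof.
  intros Hf Hab. apply (ex_RInt_continuous (V := R_CompleteNormedModule)).
  intros s Hs. apply (continuous_mult f (fun s => / (s - x))); [apply Hf|].
  apply continuous_Rinv_comp; [|specialize (Hab s Hs); lra].
  apply continuity_pt_filterlim; reg.
Qed.

Lemma ex_RInt_pv_pieces (f : R -> R) e : (forall s, continuous f s) -> 0 < e ->
  ex_RInt (fun s => f s / (s - x)) (-1) (x - e) /\
  ex_RInt (fun s => f s / (s - x)) (x + e) 1.
Proof.
  intros Hf He. split; apply ex_RInt_div_sub; auto; intros s Hs.
  - pose proof (Rmax_lub_lt (-1) (x - e) x ltac:(lra) ltac:(lra)); lra.
  - pose proof (Rmin_glb_lt (x + e) 1 x ltac:(lra) ltac:(lra)); lra.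
Qed.

Lemma is_CPV_plus (f g : R -> R) A B :
  (forall s, continuous f s) -> (forall s, continuous g s) ->
  is_CPV f x A -> is_CPV g x B -> is_CPV (fun s => f s + g s) x (A + B).
Proof.
  intros Hf Hg HA HB.
  apply filterlim_ext_loc with (fun e => pv_trunc f x e + pv_trunc g x e).
  - apply filter_imp with (fun e => 0 < e < 1); [|apply at_right_0_lt; lra].
    intros e He. unfold pv_trunc.
    destruct (ex_RInt_pv_pieces f e Hf ltac:(lra)) as [Hf1 Hf2].
    destruct (ex_RInt_pv_pieces g e Hg ltac:(lra)) as [Hg1 Hg2].
    rewrite !(RInt_ext (fun s => (f s + g s) / (s - x))
                       (fun s => plus (f s / (s - x)) (g s / (s - x))))
      by (intros; unfold plus; simpl; unfold Rdiv; ring).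
    rewrite !(RInt_plus (V := R_CompleteNormedModule)) by assumption.
    unfold plus; simpl; ring.
  - apply (filterlim_comp_2 _ _ Rplus HA HB).
    apply (filterlim_plus (K := R_AbsRing) (V := R_NormedModule)).
Qed.

Lemma is_CPV_scal (f : R -> R) c A : (forall s, continuous f s) ->
  is_CPV f x A -> is_CPV (fun s => c * f s) x (c * A).
Proof.
  intros Hf HA.
  apply filterlim_ext_loc with (fun e => c * pv_trunc f x e).
  - apply filter_imp with (fun e => 0 < e < 1); [|apply at_right_0_lt; lra].
    intros e He. unfold pv_trunc.
    destruct (ex_RInt_pv_pieces f e Hf ltac:(lra)) as [Hf1 Hf2].
    rewrite !(RInt_ext (fun s => c * f s / (s - x)) (fun s => scal c (f s / (s - x))))
      by (intros; unfold scal; simpl; unfold mult; simpl; unfold Rdiv; ring).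
    rewrite !(RInt_scal (V := R_CompleteNormedModule)) by assumption.
    unfold scal; simpl; unfold mult; simpl; ring.
  - exact (filterlim_comp _ _ _ _ (fun z => scal c z) _ _ _ HA (filterlim_scal_r c A)).
Qed.

Lemma is_CPV_ext (f g : R -> R) A : (forall s, -1 < s < 1 -> f s = g s) ->
  is_CPV f x A -> is_CPV g x A.
Proof.
  intros Hfg HA. apply filterlim_ext_loc with (fun e => pv_trunc f x e); [|exact HA].
  apply filter_imp with (fun e => 0 < e < Rmin (1 - x) (1 + x));
    [|apply at_right_0_lt, Rmin_glb_lt; lra].
  intros e He. pose proof (Rmin_l (1 - x) (1 + x)). pose proof (Rmin_r (1 - x) (1 + x)).
  unfold pv_trunc. f_equal; apply RInt_ext; intros s Hs;
    rewrite Rmin_left, Rmax_right in Hs by lra; rewrite Hfg; auto; lra.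
Qed.

Lemma is_CPV_mul_sub (g : R -> R) I : (forall s, continuous g s) ->
  is_RInt g (-1) 1 I -> is_CPV (fun s => (s - x) * g s) x I.
Proof.
  intros Hg HI.
  assert (Hex : forall a b, ex_RInt g a b)
    by (intros; apply (ex_RInt_continuous (V := R_CompleteNormedModule)); intros; apply Hg).
  set (J := fun u => RInt g (-1) u).
  assert (HJ : forall u, continuous J u).
  { intros u. apply (ex_derive_continuous (V := R_NormedModule)). eexists.
    apply is_derive_RInt with (-1); [|apply Hg].
    apply filter_forall. intros v. apply (RInt_correct (V := R_CompleteNormedModule)), Hex. }
  apply filterlim_ext_loc with (fun e => J (x - e) + (J 1 - J (x + e))).
  - apply filter_imp with (fun e => 0 < e < 1); [|apply at_right_0_lt; lra].
    intros e He.
    assert (HJ1 : J 1 - J (x + e) = RInt g (x + e) 1).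
    { unfold J. rewrite <- (RInt_Chasles (V := R_CompleteNormedModule) g (-1) (x + e) 1)
        by apply Hex. unfold plus; simpl; ring. }
    rewrite HJ1. unfold pv_trunc, J.
    f_equal; apply RInt_ext; intros s Hs; simpl; field.
    + pose proof (Rmax_lub_lt (-1) (x - e) x ltac:(lra) ltac:(lra)); lra.
    + pose proof (Rmin_glb_lt (x + e) 1 x ltac:(lra) ltac:(lra)); lra.
  - replace I with ((fun e => J (x - e) + (J 1 - J (x + e))) 0)
      by (cbv beta; rewrite Rminus_0_r, Rplus_0_r; unfold J;
          rewrite (is_RInt_unique _ _ _ _ HI); ring).
    apply filterlim_at_right_continuous.
    apply (continuous_plus (fun e => J (x - e))).
    + apply continuous_comp; [apply continuity_pt_filterlim; reg | apply HJ].
    + apply (continuous_minus (fun _ => J 1)); [apply continuous_const|].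
      apply continuous_comp; [apply continuity_pt_filterlim; reg | apply HJ].
Qed.

Lemma is_CPV_mul_id (g : R -> R) A I : (forall s, continuous g s) ->
  is_CPV g x A -> is_RInt g (-1) 1 I -> is_CPV (fun s => s * g s) x (I + x * A).
Proof.
  intros Hg HA HI.
  apply (is_CPV_ext (fun s => (s - x) * g s + x * g s)); [intros; ring|].
  apply is_CPV_plus; auto.
  - intros s. apply (continuous_mult (fun s => s - x) g);
      [apply continuity_pt_filterlim; reg | apply Hg].
  - intros s. apply (continuous_mult (fun _ => x) g); [apply continuous_const | apply Hg].
  - now apply is_CPV_mul_sub.
  - now apply is_CPV_scal.
Qed.

Lemma is_CPV_sum (F : nat -> R -> R) (c v : nat -> R) N :
  (forall j s, continuous (F j) s) -> (forall j, is_CPV (F j) x (v j)) ->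
  is_CPV (fun s => sum_f_R0 (fun j => c j * F j s) N) x (sum_f_R0 (fun j => c j * v j) N).
Proof.
  intros HF Hv.
  assert (HcF : forall j s, continuous (fun s => c j * F j s) s).
  { intros j s. apply (continuous_mult (fun _ => c j) (F j)); [apply continuous_const | apply HF]. }
  induction N as [|N IH]; [now apply is_CPV_scal|].
  apply (is_CPV_plus (fun s => sum_f_R0 (fun j => c j * F j s) N)
                     (fun s => c (S N) * F (S N) s)).
  - intros s. now apply continuous_sum_f_R0.
  - apply HcF.
  - exact IH.
  - now apply is_CPV_scal.
Qed.

Lemma is_CPV_recurrence (f g : R -> R) a b A B I :
  (forall s, continuous f s) -> (forall s, continuous g s) ->
  is_CPV g x A -> is_CPV f x B -> is_RInt g (-1) 1 I ->
  is_CPV (fun s => a * (s * g s) + b * f s) x (a * (I + x * A) + b * B).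
Proof.
  intros Hf Hg HA HB HI.
  assert (Hsg : forall s, continuous (fun s => s * g s) s)
    by (intros s; apply (continuous_mult (fun s => s) g); [apply continuous_id | apply Hg]).
  apply is_CPV_plus.
  - intros s. apply (continuous_mult (fun _ => a)); [apply continuous_const | apply Hsg].
  - intros s. apply (continuous_mult (fun _ => b)); [apply continuous_const | apply Hf].
  - apply is_CPV_scal; [exact Hsg | now apply is_CPV_mul_id].
  - now apply is_CPV_scal.
Qed.

End PrincipalValue.

Lemma sin_INR_PI n : sin (INR n * PI) = 0.
Proof. apply sin_eq_0_1. exists (Z.of_nat n). now rewrite <- INR_IZR_INZ. Qed.

Lemma sin_add_three_term u t : sin (u + t) = 2 * cos t * sin u - sin (u - t).
Proof. rewrite sin_plus, sin_minus. ring. Qed.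

Lemma cos_add_three_term u t : cos (u + t) = 2 * cos t * cos u - cos (u - t).
Proof. rewrite cos_plus, cos_minus. ring. Qed.

Lemma chebT_rec k x : -1 <= x <= 1 ->
  chebT (S (S k)) x = 2 * x * chebT (S k) x - chebT k x.
Proof.
  intros Hx. unfold chebT. rewrite !S_INR.
  replace ((INR k + 1 + 1) * acos x) with ((INR k + 1) * acos x + acos x) by ring.
  replace (INR k * acos x) with ((INR k + 1) * acos x - acos x) by ring.
  rewrite cos_add_three_term, cos_acos by lra. ring.
Qed.

Lemma is_derive_chebT k x : -1 < x < 1 -> is_derive (chebT (S k)) x (INR (S k) * chebU k x).
Proof.
  intros Hx.
  pose proof (sin_acos_pos x Hx) as Hsin.
  assert (Hcos : is_derive (fun t => cos (INR (S k) * t)) (acos x)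
                   (- INR (S k) * sin (INR (S k) * acos x))).
  { generalize (INR (S k)); intros K. auto_derive; [exact I | ring]. }
  replace (INR (S k) * chebU k x)
    with (scal (-1 / sin (acos x)) (- INR (S k) * sin (INR (S k) * acos x))).
  - exact (is_derive_comp _ _ _ _ _ Hcos (is_derive_acos x Hx)).
  - rewrite S_INR. unfold chebU, scal; simpl; unfold mult; simpl. field. lra.
Qed.

(* [sqrt (1 - s^2) * U_k(s)], written so that it is continuous on all of R. *)
Definition wchebU (k : nat) (s : R) : R := sin ((INR k + 1) * acos s).

Lemma continuous_wchebU k s : continuous (wchebU k) s.
Proof.
  apply (continuous_comp acos (fun t => sin ((INR k + 1) * t))); [apply continuous_acos|].
  apply continuity_pt_filterlim; reg.
Qed.

Lemma wchebU_0 s : -1 <= s <= 1 -> wchebU 0 s = sqrt (1 - s ^ 2).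
Proof.
  intros Hs. unfold wchebU. rewrite Rplus_0_l, Rmult_1_l, sin_acos by lra.
  unfold Rsqr. f_equal; ring.
Qed.

Lemma wchebU_1 s : -1 <= s <= 1 -> wchebU 1 s = 2 * s * wchebU 0 s.
Proof.
  intros Hs. unfold wchebU.
  replace ((INR 1 + 1) * acos s) with (2 * acos s) by (simpl; ring).
  rewrite sin_2a, cos_acos by lra. simpl INR. rewrite Rplus_0_l, Rmult_1_l. ring.
Qed.

Lemma wchebU_rec k s : -1 <= s <= 1 ->
  wchebU (S (S k)) s = 2 * s * wchebU (S k) s - wchebU k s.
Proof.
  intros Hs. unfold wchebU. rewrite !S_INR.
  replace ((INR k + 1 + 1 + 1) * acos s) with ((INR k + 1 + 1) * acos s + acos s) by ring.
  replace ((INR k + 1) * acos s) with ((INR k + 1 + 1) * acos s - acos s) by ring.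
  rewrite sin_add_three_term, cos_acos by lra. ring.
Qed.

Lemma is_RInt_wchebU k (G : R -> R) :
  (forall t, is_derive G t ((cos ((INR k + 2) * t) - cos (INR k * t)) / 2)) ->
  is_RInt (wchebU k) (-1) 1 (G 0 - G PI).
Proof.
  intros HG.
  replace (G 0 - G PI) with (G (acos 1) - G (acos (-1)))
    by (rewrite acos_1, acos_m1; reflexivity).
  apply (is_RInt_derive_interior (fun s => G (acos s))); [lra| | |intros; apply continuous_wchebU].
  - intros s _. apply (continuous_comp acos G); [apply continuous_acos|].
    apply (ex_derive_continuous (V := R_NormedModule)). eexists. apply HG.
  - intros s Hs.
    pose proof (sin_acos_pos s Hs) as Hsin.
    replace (wchebU k s) with (scal (-1 / sin (acos s))
                                ((cos ((INR k + 2) * acos s) - cos (INR k * acos s)) / 2)).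
    + exact (is_derive_comp _ _ _ _ _ (HG (acos s)) (is_derive_acos s Hs)).
    + unfold wchebU, scal; simpl; unfold mult; simpl.
      (* cos (k t) - cos ((k+2) t) = 2 sin ((k+1) t) sin t *)
      replace ((INR k + 2) * acos s) with ((INR k + 1) * acos s + acos s) by ring.
      replace (INR k * acos s) with ((INR k + 1) * acos s - acos s) by ring.
      rewrite cos_plus, cos_minus. field. lra.
Qed.

Lemma is_RInt_wchebU_0 : is_RInt (wchebU 0) (-1) 1 (PI / 2).
Proof.
  set (G := fun t => (sin (2 * t) / 2 - t) / 2).
  replace (PI / 2) with (G 0 - G PI) by (unfold G; rewrite Rmult_0_r, sin_0, sin_2PI; field).
  apply is_RInt_wchebU. intros t. unfold G. auto_derive; [exact I|].
  simpl INR. rewrite Rmult_0_l, cos_0, Rplus_0_l. lra.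
Qed.

Lemma is_RInt_wchebU_S k : is_RInt (wchebU (S k)) (-1) 1 0.
Proof.
  set (a := INR (S k)). set (b := INR (S (S (S k)))).
  assert (Ha : a <> 0) by (apply not_0_INR; lia).
  assert (Hb : b <> 0) by (apply not_0_INR; lia).
  set (G := fun t => (sin (b * t) / b - sin (a * t) / a) / 2).
  assert (HG : G 0 - G PI = 0)
    by (unfold G, a, b; rewrite !Rmult_0_r, sin_0, !sin_INR_PI; unfold Rdiv; ring).
  rewrite <- HG. apply is_RInt_wchebU. intros t.
  replace (INR (S k) + 2) with b by (unfold b; rewrite !S_INR; ring).
  fold a. unfold G. clearbody a b. auto_derive; [exact I|]. field; auto.
Qed.

(* With [c = sqrt (1 - x^2)], [c * ln |s - x| + wchebU0_primitive x s] is a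
   primitive of [sqrt (1 - s^2) / (s - x)] on either side of [x]. *)
Definition wchebU0_primitive (x s : R) : R :=
  - sqrt (1 - x ^ 2) * ln (1 - x * s + sqrt (1 - x ^ 2) * sqrt (1 - s ^ 2))
  + sqrt (1 - s ^ 2) + x * acos s.

Lemma wchebU0_primitive_ln_arg_pos x s : -1 < x < 1 -> -1 <= s <= 1 ->
  0 < 1 - x * s + sqrt (1 - x ^ 2) * sqrt (1 - s ^ 2).
Proof.
  intros Hx Hs.
  assert (0 <= sqrt (1 - x ^ 2) * sqrt (1 - s ^ 2)) by (apply Rmult_le_pos; apply sqrt_pos).
  assert (x * s < 1) by (destruct (Rle_lt_dec 0 s); nra).
  lra.
Qed.

Lemma continuous_wchebU0_primitive x s : -1 < x < 1 -> -1 <= s <= 1 ->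
  continuous (wchebU0_primitive x) s.
Proof.
  intros Hx Hs. unfold wchebU0_primitive.
  assert (Hsqrt : continuous (fun s => sqrt (1 - s ^ 2)) s)
    by (apply continuous_sqrt_comp, continuity_pt_filterlim; reg).
  apply (continuous_plus (fun s => _ + sqrt (1 - s ^ 2))).
  - apply (continuous_plus (fun s => - sqrt (1 - x ^ 2) * _)); [|exact Hsqrt].
    apply (continuous_mult (fun _ => - sqrt (1 - x ^ 2))); [apply continuous_const|].
    apply (continuous_comp (fun s => 1 - x * s + sqrt (1 - x ^ 2) * sqrt (1 - s ^ 2)) ln).
    + apply (continuous_plus (fun s => 1 - x * s)); [apply continuity_pt_filterlim; reg|].
      apply (continuous_mult (fun _ => sqrt (1 - x ^ 2))); [apply continuous_const | exact Hsqrt].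
    + apply continuous_ln, wchebU0_primitive_ln_arg_pos; assumption.
  - apply (continuous_mult (fun _ => x)); [apply continuous_const | apply continuous_acos].
Qed.

Lemma is_derive_wchebU0_primitive x sg s : -1 < x < 1 -> -1 < s < 1 ->
  sg * sg = 1 -> 0 < sg * (s - x) ->
  is_derive (fun s => sqrt (1 - x ^ 2) * ln (sg * (s - x)) + wchebU0_primitive x s) s
            (sqrt (1 - s ^ 2) / (s - x)).
Proof.
  intros Hx Hs Hsg2 Hsg.
  set (c := sqrt (1 - x ^ 2)).
  set (w := sqrt (1 - s ^ 2)).
  assert (Hc : c * c = 1 - x ^ 2) by (apply sqrt_sqrt; nra).
  assert (Hw : w * w = 1 - s ^ 2) by (apply sqrt_sqrt; nra).
  assert (Hw0 : 0 < w) by (apply sqrt_lt_R0; nra).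
  assert (HW : 0 < 1 - x * s + c * w) by (apply wchebU0_primitive_ln_arg_pos; lra).
  assert (Hsx : s - x <> 0) by (intros Hz; rewrite Hz, Rmult_0_r in Hsg; lra).
  assert (Hsg0 : sg <> 0) by (intros Hz; rewrite Hz, Rmult_0_l in Hsg; lra).
  evar (d : R).
  assert (Hd : is_derive (fun s => c * ln (sg * (s - x))
                 - c * ln (1 - x * s + c * sqrt (1 - s ^ 2)) + sqrt (1 - s ^ 2)) s d).
  { auto_derive.
    - replace (1 + - (s * (s * 1))) with (1 - s ^ 2) by ring. fold w.
      replace (s + - x) with (s - x) by ring.
      replace (1 + - (x * s)) with (1 - x * s) by ring. repeat split; nra.
    - unfold d. reflexivity. }
  pose proof (is_derive_plus _ _ _ _ _ Hd (is_derive_scal _ _ x _ (is_derive_acos s Hs))) as H.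
  replace (w / (s - x)) with (plus d (scal x (-1 / sin (acos s)))).
  - eapply is_derive_ext; [|exact H].
    intros t. unfold wchebU0_primitive, c.
    change (plus ?u ?v) with (u + v). change (scal ?u ?v) with (u * v).
    match goal with |- ?a = ?b => change (@eq R a b) end. ring.
  - unfold d, plus, scal; simpl; unfold mult; simpl.
    rewrite sin_acos by lra. unfold Rsqr.
    replace (1 - s * s) with (1 - s ^ 2) by ring.
    replace (1 + - (s * (s * 1))) with (1 - s ^ 2) by ring.
    replace (1 - s * (s * 1)) with (1 - s ^ 2) by ring.
    replace (1 + - (x * s)) with (1 - x * s) by ring.
    replace (s + - x) with (s - x) by ring. fold w.
    field_simplify_eq; [|repeat split; try lra; auto].
    replace (c ^ 2) with (1 - x ^ 2) by (rewrite <- Hc; ring).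
    replace (w ^ 2) with (1 - s ^ 2) by (rewrite <- Hw; ring).
    replace (w ^ 3) with (w * (1 - s ^ 2)) by (rewrite <- Hw; ring).
    ring.
Qed.

Lemma is_RInt_wchebU0_div_sub x sg a b : -1 < x < 1 -> sg * sg = 1 ->
  -1 <= a < b -> b <= 1 -> (forall s, a <= s <= b -> 0 < sg * (s - x)) ->
  let F s := sqrt (1 - x ^ 2) * ln (sg * (s - x)) + wchebU0_primitive x s in
  is_RInt (fun s => wchebU 0 s / (s - x)) a b (F b - F a).
Proof.
  intros Hx Hsg2 Hab Hb Hpos F. apply is_RInt_derive_interior; [lra| | |].
  - intros s Hs. apply (continuous_plus (fun s => sqrt (1 - x ^ 2) * ln (sg * (s - x)))).
    + apply (continuous_mult (fun _ => sqrt (1 - x ^ 2))); [apply continuous_const|].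
      apply (continuous_comp (fun s => sg * (s - x)) ln);
        [apply continuity_pt_filterlim; reg | apply continuous_ln, Hpos; lra].
    + apply continuous_wchebU0_primitive; lra.
  - intros s Hs. rewrite wchebU_0 by lra.
    apply is_derive_wchebU0_primitive; auto; try lra. apply Hpos; lra.
  - intros s Hs. apply (continuous_mult (wchebU 0) (fun s => / (s - x)));
      [apply continuous_wchebU|].
    apply continuous_Rinv_comp; [apply continuity_pt_filterlim; reg|].
    specialize (Hpos s Hs). intros Hz. rewrite Hz, Rmult_0_r in Hpos. lra.
Qed.

Lemma is_CPV_wchebU_0 x : -1 < x < 1 -> is_CPV (wchebU 0) x (- PI * x).
Proof.
  intros Hx.
  set (phi := fun e => wchebU0_primitive x (x - e) - wchebU0_primitive x (x + e) - x * PI).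
  apply filterlim_ext_loc with phi.
  - apply filter_imp with (fun e => 0 < e < Rmin (1 - x) (1 + x));
      [|apply at_right_0_lt, Rmin_glb_lt; lra].
    intros e He. pose proof (Rmin_l (1 - x) (1 + x)). pose proof (Rmin_r (1 - x) (1 + x)).
    unfold pv_trunc.
    rewrite (is_RInt_unique _ _ _ _ (is_RInt_wchebU0_div_sub x (-1) (-1) (x - e) Hx
                                       ltac:(lra) ltac:(lra) ltac:(lra) ltac:(intros; lra))).
    rewrite (is_RInt_unique _ _ _ _ (is_RInt_wchebU0_div_sub x 1 (x + e) 1 Hx
                                       ltac:(lra) ltac:(lra) ltac:(lra) ltac:(intros; lra))).
    unfold phi, wchebU0_primitive. set (c := sqrt (1 - x ^ 2)).
    replace (-1 * (x - e - x)) with e by ring.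
    replace (1 * (x + e - x)) with e by ring.
    replace (-1 * (-1 - x)) with (1 + x) by ring.
    replace (1 * (1 - x)) with (1 - x) by ring.
    replace (1 - (-1) ^ 2) with 0 by ring. replace (1 - 1 ^ 2) with 0 by ring.
    rewrite sqrt_0, acos_1, acos_m1.
    replace (1 - x * -1 + c * 0) with (1 + x) by ring.
    replace (1 - x * 1 + c * 0) with (1 - x) by ring.
    ring.
  - replace (- PI * x) with (phi 0) by (unfold phi; rewrite Rminus_0_r, Rplus_0_r; ring).
    apply filterlim_at_right_continuous. unfold phi.
    apply (continuous_minus
             (fun e => wchebU0_primitive x (x - e) - wchebU0_primitive x (x + e))
             (fun _ => x * PI)); [|apply continuous_const].
    apply (continuous_minus (fun e => wchebU0_primitive x (x - e))
                            (fun e => wchebU0_primitive x (x + e))).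
    + apply (continuous_comp (fun e => x - e));
        [apply continuity_pt_filterlim; reg | apply continuous_wchebU0_primitive; lra].
    + apply (continuous_comp (fun e => x + e));
        [apply continuity_pt_filterlim; reg | apply continuous_wchebU0_primitive; lra].
Qed.

Lemma is_CPV_wchebU k x : -1 < x < 1 -> is_CPV (wchebU k) x (- PI * chebT (S k) x).
Proof.
  intros Hx.
  assert (HT0 : chebT 0 x = 1) by (unfold chebT; rewrite Rmult_0_l; apply cos_0).
  assert (HT1 : chebT 1 x = x)
    by (unfold chebT; simpl INR; rewrite Rmult_1_l; apply cos_acos; lra).
  enough (Hpair : forall k, is_CPV (wchebU k) x (- PI * chebT (S k) x) /\
                            is_CPV (wchebU (S k)) x (- PI * chebT (S (S k)) x))
    by exact (proj1 (Hpair k)).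
  intros j; induction j as [|j [IH1 IH2]].
  - assert (H0 : is_CPV (wchebU 0) x (- PI * chebT 1 x))
      by (rewrite HT1; now apply is_CPV_wchebU_0).
    split; [exact H0|].
    (* the dummy term [0 * wchebU 0 s] fits wchebU_1 to is_CPV_recurrence *)
    apply (is_CPV_ext x Hx (fun s => 2 * (s * wchebU 0 s) + 0 * wchebU 0 s));
      [intros s Hs; rewrite wchebU_1 by lra; ring|].
    replace (- PI * chebT 2 x)
      with (2 * (PI / 2 + x * (- PI * chebT 1 x)) + 0 * (- PI * chebT 1 x))
      by (rewrite (chebT_rec 0), HT0, HT1 by lra; field).
    apply (is_CPV_recurrence x Hx); try exact H0;
      [intro; apply continuous_wchebU.. | apply is_RInt_wchebU_0].
  - split; [exact IH2|].
    apply (is_CPV_ext x Hx (fun s => 2 * (s * wchebU (S j) s) + (-1) * wchebU j s));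
      [intros s Hs; rewrite wchebU_rec by lra; ring|].
    replace (- PI * chebT (S (S (S j))) x)
      with (2 * (0 + x * (- PI * chebT (S (S j)) x)) + (-1) * (- PI * chebT (S j) x))
      by (rewrite (chebT_rec (S j)) by lra; ring).
    apply (is_CPV_recurrence x Hx); try assumption;
      [intro; apply continuous_wchebU.. | apply is_RInt_wchebU_S].
Qed.

Lemma sin_sub_INR_PI z k : sin (z - INR k * PI) = (-1) ^ k * sin z.
Proof.
  induction k as [|k IH]; [simpl; rewrite Rmult_0_l, Rminus_0_r; ring|].
  rewrite S_INR. replace (z - (INR k + 1) * PI) with ((z - INR k * PI) - PI) by ring.
  rewrite sin_minus, sin_PI, cos_PI, IH. simpl. ring.
Qed.

Lemma INR_index n m j : (2 * m <= n)%nat ->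
  INR (n - 2 * m + 2 * j) + 1 = INR n + 1 - 2 * INR m + 2 * INR j.
Proof. intros H. rewrite plus_INR, minus_INR, !mult_INR by exact H. simpl. ring. Qed.

Lemma weight_sin_acos m s : (1 <= m)%nat -> -1 <= s <= 1 ->
  (1 - s ^ 2) ^ (m - 1) * sqrt (1 - s ^ 2) = sin (acos s) ^ (2 * m - 1).
Proof.
  intros Hm Hs. rewrite sin_acos by lra.
  replace (1 - s²) with (1 - s ^ 2) by (unfold Rsqr; ring).
  rewrite <- (pow2_sqrt (1 - s ^ 2)) at 1 by nra.
  rewrite <- pow_mult. replace (2 * m - 1)%nat with (S (2 * (m - 1))) by lia.
  simpl. ring.
Qed.

Definition expand_coef (m j : nat) : R :=
  (-1) ^ m * (1 / 2) ^ (2 * m - 1) * ((-1) ^ j * binR (2 * m - 1) j).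

Lemma chebT_weight_expand m n s : (1 <= m)%nat -> (2 * m <= n)%nat -> -1 <= s <= 1 ->
  chebT n s * ((1 - s ^ 2) ^ (m - 1) * sqrt (1 - s ^ 2)) =
  sum_f_R0 (fun j => expand_coef m j * wchebU (n - 2 * m + 2 * j) s) (2 * m - 1).
Proof.
  intros Hm Hn Hs.
  set (p := (2 * m - 1)%nat). set (t := acos s).
  assert (Hp : INR p = 2 * INR m - 1)
    by (unfold p; rewrite minus_INR, mult_INR by lia; simpl; ring).
  rewrite (sum_eq _ (fun j => (-1) ^ j * binR p j * sin ((INR n - INR p + 2 * INR j) * t)
                              * ((-1) ^ m * (1 / 2) ^ p))).
  2:{ intros j _. unfold expand_coef, wchebU. fold p t.
      rewrite INR_index, Hp by lia.
      replace (INR n - (2 * INR m - 1)) with (INR n + 1 - 2 * INR m) by ring.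
      ring. }
  rewrite <- scal_sum, sum_binR_sin, weight_sin_acos by (lia || lra). fold t p.
  replace (INR n * t - INR p * (PI / 2)) with ((INR n * t + PI / 2) - INR m * PI)
    by (rewrite Hp; field).
  rewrite sin_sub_INR_PI, sin_plus, sin_PI2, cos_PI2. unfold chebT. fold t.
  replace ((-1) ^ m * (1 / 2) ^ p
           * (2 ^ p * sin t ^ p * ((-1) ^ m * (sin (INR n * t) * 0 + cos (INR n * t) * 1))))
    with (((-1) * (-1)) ^ m * (1 / 2 * 2) ^ p * (cos (INR n * t) * sin t ^ p))
    by (rewrite !Rpow_mult_distr; ring).
  replace ((-1) * (-1)) with 1 by ring. replace (1 / 2 * 2) with 1 by field.
  rewrite !pow1. ring.
Qed.

Lemma is_CPV_chebT_weight m n x : (1 <= m)%nat -> (2 * m <= n)%nat -> -1 < x < 1 ->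
  is_CPV (fun s => chebT n s * ((1 - s ^ 2) ^ (m - 1) * sqrt (1 - s ^ 2))) x
    (sum_f_R0 (fun j => expand_coef m j * (- PI * chebT (S (n - 2 * m + 2 * j)) x)) (2 * m - 1)).
Proof.
  intros Hm Hn Hx.
  apply (is_CPV_ext x Hx
           (fun s => sum_f_R0 (fun j => expand_coef m j * wchebU (n - 2 * m + 2 * j) s)
                              (2 * m - 1))).
  - intros s Hs. symmetry. apply chebT_weight_expand; auto; lra.
  - apply (is_CPV_sum x Hx (fun j => wchebU (n - 2 * m + 2 * j))).
    + intros j s. apply continuous_wchebU.
    + intros j. now apply is_CPV_wchebU.
Qed.

Lemma CPV_correct D x l : is_CPV D x l -> CPV D x = l.
Proof.
  intros Hl. apply (eq_close (K := R_AbsRing) (V := R_NormedModule)).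
  apply (iota_correct_weak (T := R_CompleteSpace) (is_CPV D x)); [|exact Hl].
  intros u v Hu Hv.
  rewrite (filterlim_locally_unique (K := R_AbsRing) (V := R_NormedModule)
             (F := at_right 0) _ u v Hu Hv).
  apply close_refl.
Qed.

Lemma is_derive_sum_f_R0 (f : nat -> R -> R) (d : nat -> R) x N :
  (forall j, is_derive (f j) x (d j)) ->
  is_derive (fun y => sum_f_R0 (fun j => f j y) N) x (sum_f_R0 d N).
Proof.
  intros Hd. induction N as [|N IH]; [apply Hd|].
  exact (is_derive_plus _ _ _ _ _ IH (Hd (S N))).
Qed.

Theorem mainTheorem3 (m n : nat) (hm : (1 <= m)%nat) (hn : (2 * m + 1 <= n)%nat)
  (r : R) (hr : Rabs r < 1) :
  is_hadamard2
    (fun s => chebT n s * ((1 - s ^ 2) ^ (m - 1) * sqrt (1 - s ^ 2)))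
    r
    (PI * (-1) ^ (m + 1)%nat * (1 / 2) ^ (2 * m - 1)%nat *
     sum_f_R0 (fun j => (-1) ^ j * Binomial.C (2 * m - 1)%nat j *
                        (INR n + 1 - 2 * INR m + 2 * INR j) *
                        chebU (n - 2 * m + 2 * j)%nat r) (2 * m - 1)%nat).
Proof.
  assert (Hr : -1 < r < 1) by (apply Rabs_def2 in hr; lra).
  assert (Hn : (2 * m <= n)%nat) by lia.
  set (k := fun j => (n - 2 * m + 2 * j)%nat).
  set (V := fun x => sum_f_R0 (fun j => expand_coef m j * (- PI * chebT (S (k j)) x)) (2 * m - 1)).
  split.
  - intros x Hx. eexists. now apply is_CPV_chebT_weight.
  - apply is_derive_ext_loc with V.
    + apply (locally_interval _ r (-1) 1); try (simpl; lra).
      intros y Hy1 Hy2. symmetry. apply CPV_correct, is_CPV_chebT_weight; auto; simpl in *; lra.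
    + replace (PI * _ * _ * _) with (sum_f_R0 (fun j => expand_coef m j
                                         * (- PI * (INR (S (k j)) * chebU (k j) r))) (2 * m - 1)).
      * apply is_derive_sum_f_R0. intros j.
        apply (is_derive_scal (fun y => - PI * chebT (S (k j)) y)).
        apply (is_derive_scal (chebT (S (k j)))).
        now apply is_derive_chebT.
      * rewrite scal_sum. apply sum_eq. intros j Hj.
        unfold expand_coef, k. rewrite binR_C, S_INR, INR_index, pow_add by lia. simpl pow. ring.
Qed.
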